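(* Let $I(x)=\int_0^x e^{u^2/2}\operatorname{erf}(u/\sqrt2)\,du$. Then for every real $x\neq0$, \[ I(x)\;\ge\;\ell(x):=\sqrt{\frac{(e^{x^2/2}-1)^3}{x^2e^{x^2/2}}}. \]
   Context: $\operatorname{erf}(z)=\frac{2}{\sqrt\pi}\int_0^z e^{-t^2}dt$. *)

From Stdlib Require Import Reals.
From Coquelicot Require Import Coquelicot.
Open Scope R_scope.

Definition erf (z : R) : R := 2 / sqrt PI * RInt (fun t => exp (- t ^ 2)) 0 z.

Definition I_int (x : R) : R :=
  RInt (fun u => exp (u ^ 2 / 2) * erf (u / sqrt 2)) 0 x.

Definition ell (x : R) : R :=
  sqrt ((exp (x ^ 2 / 2) - 1) ^ 3 / (x ^ 2 * exp (x ^ 2 / 2))).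

From Stdlib Require Import Reals Lra.
From Coquelicot Require Import Coquelicot.
Open Scope R_scope.

(* [gauss_int z ^ 2 + gauss_atan z] has derivative [0], so it equals its value [atan 1 = PI / 4]
   at [0]; as [gauss_atan z <= exp (- z ^ 2) * PI / 4], this gives [erf z ^ 2 >= 1 - exp (- z ^ 2)],
   i.e. [g := I_integrand] satisfies [g u ^ 2 >= E (E - 1)] with [E = exp (u ^ 2 / 2)].
   For [t > 0] write [ell = sqrt Q] with [Q = ell_sq].  Since [E - 1 >= t ^ 2 / 2] one gets
   [Q' <= 2 (E - 1) ^ 2 / t], and [((E - 1) ^ 2 / t) ^ 2 = Q E (E - 1) <= Q g ^ 2], so
   [ell' = Q' / (2 sqrt Q) <= g].  Hence [I_int - ell] is nondecreasing on [(0, +oo)]; as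
   [I_int >= 0] there and [ell e <= 2 e ^ 2] near [0], it is nonnegative.  Both sides are
   even in [x]. *)

Lemma continuous_of_is_derive (f : R -> R) (x l : R) : is_derive f x l -> continuous f x.
Proof. intros H. apply (@ex_derive_continuous R_AbsRing R_NormedModule). now exists l. Qed.

Lemma ex_RInt_of_continuous (f : R -> R) (a b : R) :
  (forall t, continuous f t) -> ex_RInt f a b.
Proof. intros Hf. apply (@ex_RInt_continuous R_CompleteNormedModule). intros; apply Hf. Qed.

Lemma is_derive_RInt_continuous (f : R -> R) (z : R) :
  (forall t, continuous f t) -> is_derive (fun y => RInt f 0 y) z (f z).
Proof.
  intros Hf. apply is_derive_RInt with (a := 0).
  - apply filter_forall. intros b.
    apply (@RInt_correct R_CompleteNormedModule), ex_RInt_of_continuous, Hf.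
  - apply Hf.
Qed.

Lemma eq_of_is_derive_0 (f : R -> R) (a b : R) : (forall t, is_derive f t 0) -> f a = f b.
Proof.
  intros Hf. destruct (MVT_gen f a b (fun _ => 0)) as [c [_ Hc]].
  - intros; apply Hf.
  - intros t _. apply continuity_pt_filterlim, (continuous_of_is_derive _ _ _ (Hf t)).
  - lra.
Qed.

Lemma le_of_is_derive_nonneg (f df : R -> R) (a b : R) : a <= b ->
  (forall t, a <= t <= b -> is_derive f t (df t)) ->
  (forall t, a <= t <= b -> 0 <= df t) -> f a <= f b.
Proof.
  intros Hab Hf Hdf.
  assert (Hmin : Rmin a b = a) by (apply Rmin_left; lra).
  assert (Hmax : Rmax a b = b) by (apply Rmax_right; lra).
  destruct (MVT_gen f a b df) as [c [Hc Hmvt]]; rewrite Hmin, Hmax in *.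
  - intros t Ht. apply Hf; lra.
  - intros t Ht. apply continuity_pt_filterlim, (continuous_of_is_derive _ _ _ (Hf t Ht)).
  - assert (0 <= df c * (b - a)) by (apply Rmult_le_pos; [apply Hdf|]; lra). lra.
Qed.

Lemma RInt_0_opp (f : R -> R) (x : R) : (forall t, continuous f t) ->
  RInt f 0 (- x) = RInt (fun t => - f (- t)) 0 x.
Proof.
  intros Hf.
  replace (- x) with (-1 * x + 0) by ring. replace 0 with (-1 * 0 + 0) at 1 by ring.
  rewrite <- (@RInt_comp_lin R_CompleteNormedModule) by now apply ex_RInt_of_continuous.
  apply RInt_ext. intros t _. unfold scal; simpl; unfold mult; simpl.
  replace (-1 * t + 0) with (- t) by ring. ring.
Qed.

Lemma RInt_0_opp_even (f : R -> R) (x : R) : (forall t, continuous f t) ->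
  (forall t, f (- t) = f t) -> RInt f 0 (- x) = - RInt f 0 x.
Proof.
  intros Hf Hev. rewrite RInt_0_opp by exact Hf.
  rewrite (RInt_ext _ (fun t => opp (f t))) by (intros t _; rewrite Hev; reflexivity).
  now rewrite (@RInt_opp R_CompleteNormedModule) by now apply ex_RInt_of_continuous.
Qed.

Lemma RInt_0_opp_odd (f : R -> R) (x : R) : (forall t, continuous f t) ->
  (forall t, f (- t) = - f t) -> RInt f 0 (- x) = RInt f 0 x.
Proof.
  intros Hf Hodd. rewrite RInt_0_opp by exact Hf.
  apply RInt_ext. intros t _. rewrite Hodd. apply Ropp_involutive.
Qed.

Lemma RInt_atan_1 : RInt (fun t => / (1 + t ^ 2)) 0 1 = PI / 4.
Proof.
  rewrite (is_RInt_unique _ _ _ (minus (atan 1) (atan 0))).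
  - rewrite atan_1, atan_0. unfold minus, plus, opp; simpl. ring.
  - apply (@is_RInt_derive R_CompleteNormedModule).
    + intros t _. cbv beta. rewrite <- Rsqr_pow2. apply is_derive_atan.
    + intros t _. apply (@ex_derive_continuous R_AbsRing R_NormedModule).
      auto_derive. nra.
Qed.

Lemma exp_le_compat (x y : R) : x <= y -> exp x <= exp y.
Proof. intros [Hlt | ->]; [left; apply exp_increasing, Hlt | right; reflexivity]. Qed.

Lemma exp_sub_1_le_mul (x : R) : exp x - 1 <= x * exp x.
Proof.
  pose proof (exp_ineq1_le (- x)) as H. rewrite exp_Ropp in H.
  pose proof (exp_pos x).
  apply Rmult_le_compat_r with (r := exp x) in H; [|lra].
  rewrite Rinv_l in H by lra. nra.
Qed.

Definition gauss_int (z : R) : R := RInt (fun t => exp (- t ^ 2)) 0 z.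

Definition gauss_atan_kernel (z t : R) : R := exp (- (z ^ 2 * (1 + t ^ 2))) / (1 + t ^ 2).

Definition gauss_atan (z : R) : R := RInt (gauss_atan_kernel z) 0 1.

Lemma continuous_exp_neg_sq (t : R) : continuous (fun u => exp (- u ^ 2)) t.
Proof. apply (@ex_derive_continuous R_AbsRing R_NormedModule). auto_derive. auto. Qed.

Lemma is_derive_gauss_int (z : R) : is_derive gauss_int z (exp (- z ^ 2)).
Proof. apply (is_derive_RInt_continuous (fun t => exp (- t ^ 2))), continuous_exp_neg_sq. Qed.

Lemma is_derive_gauss_atan_kernel (z t : R) :
  is_derive (fun u => gauss_atan_kernel u t) z (-2 * z * exp (- (z ^ 2 * (1 + t ^ 2)))).
Proof.
  assert (0 < 1 + t ^ 2) by nra.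
  unfold gauss_atan_kernel. auto_derive; [lra|]. simpl. field. simpl in *; lra.
Qed.

Lemma continuous_gauss_atan_kernel (z t : R) : continuous (gauss_atan_kernel z) t.
Proof.
  assert (0 < 1 + t ^ 2) by nra.
  apply (@ex_derive_continuous R_AbsRing R_NormedModule).
  unfold gauss_atan_kernel. auto_derive. lra.
Qed.

Lemma continuity_2d_pt_gauss_atan_kernel_deriv (z t : R) :
  continuity_2d_pt (fun u v => -2 * u * exp (- (u ^ 2 * (1 + v ^ 2)))) z t.
Proof.
  apply continuity_2d_pt_ext with (f := fun u v => (-2 * u) * exp (- (u * u * (1 + v * v)))).
  { intros u v. simpl. now rewrite !Rmult_1_r. }
  apply continuity_2d_pt_mult.
  - apply continuity_2d_pt_mult; [apply continuity_2d_pt_const | apply continuity_2d_pt_id1].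
  - apply continuity_1d_2d_pt_comp.
    { apply derivable_continuous_pt, derivable_pt_exp. }
    apply continuity_2d_pt_opp, continuity_2d_pt_mult.
    + apply continuity_2d_pt_mult; apply continuity_2d_pt_id1.
    + apply continuity_2d_pt_plus; [apply continuity_2d_pt_const|].
      apply continuity_2d_pt_mult; apply continuity_2d_pt_id2.
Qed.

(* The substitution [s = z t] turns the [z]-derivative of the kernel into [gauss_int z]. *)
Lemma RInt_gauss_atan_kernel_deriv (z : R) :
  RInt (fun t => -2 * z * exp (- (z ^ 2 * (1 + t ^ 2)))) 0 1 = -2 * exp (- z ^ 2) * gauss_int z.
Proof.
  set (h := fun s => exp (- s ^ 2)).
  rewrite (RInt_ext _ (fun t => scal (-2 * exp (- z ^ 2)) (scal z (h (z * t + 0))))).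
  2:{ intros t _. unfold h, scal; simpl; unfold mult; simpl.
      replace (- (z * (z * 1) * (1 + t * (t * 1))))
        with (- (z * (z * 1)) + - ((z * t + 0) * ((z * t + 0) * 1))) by ring.
      rewrite exp_plus. ring. }
  rewrite (@RInt_scal R_CompleteNormedModule).
  2:{ apply ex_RInt_of_continuous. intros t.
      apply (continuous_scal_r z (fun t => h (z * t + 0))), continuous_comp.
      - apply (@ex_derive_continuous R_AbsRing R_NormedModule). auto_derive. auto.
      - apply continuous_exp_neg_sq. }
  rewrite (@RInt_comp_lin R_CompleteNormedModule)
    by (apply ex_RInt_of_continuous, continuous_exp_neg_sq).
  unfold gauss_int, scal; simpl; unfold mult; simpl.
  replace (z * 0 + 0) with 0 by ring. replace (z * 1 + 0) with z by ring. reflexivity.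
Qed.

Lemma is_derive_gauss_atan (z : R) :
  is_derive gauss_atan z (-2 * exp (- z ^ 2) * gauss_int z).
Proof.
  rewrite <- RInt_gauss_atan_kernel_deriv.
  rewrite (RInt_ext _ (fun t => Derive (fun u => gauss_atan_kernel u t) z))
    by (intros t _; symmetry; apply is_derive_unique, is_derive_gauss_atan_kernel).
  apply (is_derive_RInt_param gauss_atan_kernel 0 1 z).
  - apply filter_forall. intros u t _. eexists. apply is_derive_gauss_atan_kernel.
  - intros t _. eapply continuity_2d_pt_ext; [|apply continuity_2d_pt_gauss_atan_kernel_deriv].
    intros u v. symmetry. apply is_derive_unique, is_derive_gauss_atan_kernel.
  - apply filter_forall. intros u. apply ex_RInt_of_continuous, continuous_gauss_atan_kernel.
Qed.

Lemma gauss_atan_0 : gauss_atan 0 = PI / 4.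
Proof.
  rewrite <- RInt_atan_1. apply RInt_ext. intros t _. unfold gauss_atan_kernel.
  replace (- (0 ^ 2 * (1 + t ^ 2))) with 0 by ring. rewrite exp_0. apply Rmult_1_l.
Qed.

Lemma gauss_int_sq_add_gauss_atan (z : R) : gauss_int z ^ 2 + gauss_atan z = PI / 4.
Proof.
  rewrite (eq_of_is_derive_0 (fun y => gauss_int y ^ 2 + gauss_atan y) z 0).
  - unfold gauss_int. rewrite RInt_point, gauss_atan_0. unfold zero; simpl. ring.
  - intros t.
    replace 0 with (plus (INR 2 * exp (- t ^ 2) * gauss_int t ^ Init.Nat.pred 2)
                         (-2 * exp (- t ^ 2) * gauss_int t))
      by (unfold plus; simpl; ring).
    apply (is_derive_plus (fun y => gauss_int y ^ 2) gauss_atan).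
    + apply is_derive_pow, is_derive_gauss_int.
    + apply is_derive_gauss_atan.
Qed.

Lemma gauss_atan_le (z : R) : gauss_atan z <= exp (- z ^ 2) * (PI / 4).
Proof.
  assert (Hpos : forall t, 0 < 1 + t ^ 2) by (intros; nra).
  assert (Hcont : forall t, continuous (fun u => / (1 + u ^ 2)) t).
  { intros t. apply (@ex_derive_continuous R_AbsRing R_NormedModule).
    auto_derive. specialize (Hpos t). lra. }
  rewrite <- RInt_atan_1, <- (@RInt_scal R_CompleteNormedModule)
    by now apply ex_RInt_of_continuous.
  apply RInt_le; [lra | apply ex_RInt_of_continuous, continuous_gauss_atan_kernel | |].
  { apply ex_RInt_of_continuous. intros t. apply (continuous_scal_r _ _ _ (Hcont t)). }
  intros t _. change (gauss_atan_kernel z t <= exp (- z ^ 2) * / (1 + t ^ 2)).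
  unfold gauss_atan_kernel, Rdiv. apply Rmult_le_compat_r.
  - left. apply Rinv_0_lt_compat, Hpos.
  - apply exp_le_compat. nra.
Qed.

Lemma erf_sq_ge (z : R) : 1 - exp (- z ^ 2) <= erf z ^ 2.
Proof.
  change (erf z) with (2 / sqrt PI * gauss_int z).
  pose proof (gauss_int_sq_add_gauss_atan z) as Hsum. pose proof (gauss_atan_le z) as Hle.
  pose proof PI_RGT_0 as Hpi. pose proof (sqrt_sqrt PI ltac:(lra)) as Hsqrt.
  assert (0 < sqrt PI) by (apply sqrt_lt_R0; lra).
  replace ((2 / sqrt PI * gauss_int z) ^ 2) with (4 * gauss_int z ^ 2 / (sqrt PI * sqrt PI))
    by (field; lra).
  rewrite Hsqrt. apply Rmult_le_reg_l with (PI / 4); [lra|].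
  replace (PI / 4 * (4 * gauss_int z ^ 2 / PI)) with (gauss_int z ^ 2) by (field; lra).
  nra.
Qed.

Lemma continuous_erf (z : R) : continuous erf z.
Proof.
  apply (continuous_scal_r (2 / sqrt PI) gauss_int).
  apply (continuous_of_is_derive _ _ _ (is_derive_gauss_int z)).
Qed.

Lemma erf_nonneg (z : R) : 0 <= z -> 0 <= erf z.
Proof.
  intros Hz. unfold erf. assert (0 < sqrt PI) by (apply sqrt_lt_R0, PI_RGT_0).
  apply Rmult_le_pos.
  - apply Rdiv_le_0_compat; lra.
  - apply RInt_ge_0; [lra | apply ex_RInt_of_continuous, continuous_exp_neg_sq |].
    intros; left; apply exp_pos.
Qed.

Lemma erf_opp (z : R) : erf (- z) = - erf z.
Proof.
  unfold erf. rewrite RInt_0_opp_even; [ring | apply continuous_exp_neg_sq |].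
  intros t. now replace ((- t) ^ 2) with (t ^ 2) by ring.
Qed.

Definition I_integrand (u : R) : R := exp (u ^ 2 / 2) * erf (u / sqrt 2).

Lemma continuous_I_integrand (u : R) : continuous I_integrand u.
Proof.
  assert (0 < sqrt 2) by (apply sqrt_lt_R0; lra).
  apply (continuous_mult (fun u => exp (u ^ 2 / 2)) (fun u => erf (u / sqrt 2))).
  - apply (@ex_derive_continuous R_AbsRing R_NormedModule). auto_derive. auto.
  - apply (continuous_comp (fun u => u / sqrt 2) erf); [|apply continuous_erf].
    apply (@ex_derive_continuous R_AbsRing R_NormedModule). auto_derive. lra.
Qed.

Lemma I_integrand_nonneg (u : R) : 0 <= u -> 0 <= I_integrand u.
Proof.
  intros Hu. assert (0 < sqrt 2) by (apply sqrt_lt_R0; lra).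
  apply Rmult_le_pos; [left; apply exp_pos|].
  apply erf_nonneg, Rdiv_le_0_compat; lra.
Qed.

Lemma I_integrand_sq_ge (u : R) :
  exp (u ^ 2 / 2) * (exp (u ^ 2 / 2) - 1) <= I_integrand u ^ 2.
Proof.
  pose proof (erf_sq_ge (u / sqrt 2)) as H.
  assert (Hsq : (u / sqrt 2) ^ 2 = u ^ 2 / 2).
  { assert (0 < sqrt 2) by (apply sqrt_lt_R0; lra).
    rewrite <- (pow2_sqrt 2) at 2 by lra. field. lra. }
  rewrite Hsq, exp_Ropp in H. unfold I_integrand.
  set (E := exp (u ^ 2 / 2)) in *. assert (0 < E) by apply exp_pos.
  replace (E * (E - 1)) with (E ^ 2 * (1 - / E)) by (field; lra).
  rewrite Rpow_mult_distr. apply Rmult_le_compat_l; [nra | exact H].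
Qed.

Lemma I_integrand_opp (u : R) : I_integrand (- u) = - I_integrand u.
Proof.
  unfold I_integrand. replace (- u / sqrt 2) with (- (u / sqrt 2)) by (unfold Rdiv; ring).
  rewrite erf_opp. replace ((- u) ^ 2) with (u ^ 2) by ring. ring.
Qed.

Lemma is_derive_I_int (z : R) : is_derive I_int z (I_integrand z).
Proof. apply is_derive_RInt_continuous, continuous_I_integrand. Qed.

Lemma I_int_nonneg (x : R) : 0 <= x -> 0 <= I_int x.
Proof.
  intros Hx. apply RInt_ge_0; [exact Hx | apply ex_RInt_of_continuous, continuous_I_integrand |].
  intros u Hu. apply I_integrand_nonneg. lra.
Qed.

Lemma I_int_opp (x : R) : I_int (- x) = I_int x.
Proof. apply RInt_0_opp_odd; [apply continuous_I_integrand | apply I_integrand_opp]. Qed.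

Definition ell_sq (t : R) : R := (exp (t ^ 2 / 2) - 1) ^ 3 / (t ^ 2 * exp (t ^ 2 / 2)).

Definition ell_sq_deriv (t : R) : R :=
  3 * (exp (t ^ 2 / 2) - 1) ^ 2 / t
  - (exp (t ^ 2 / 2) - 1) ^ 3 * (t ^ 2 + 2) / (t ^ 3 * exp (t ^ 2 / 2)).

Lemma exp_half_sq_gt_1 (t : R) : t <> 0 -> 1 < exp (t ^ 2 / 2).
Proof. intros Ht. rewrite <- exp_0. apply exp_increasing. assert (0 < t ^ 2) by nra. lra. Qed.

Lemma ell_sq_pos (t : R) : t <> 0 -> 0 < ell_sq t.
Proof.
  intros Ht. pose proof (exp_half_sq_gt_1 t Ht). assert (0 < t ^ 2) by nra.
  apply Rdiv_lt_0_compat; [apply pow_lt; lra | apply Rmult_lt_0_compat; lra].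
Qed.

Lemma is_derive_ell_sq (t : R) : t <> 0 -> is_derive ell_sq t (ell_sq_deriv t).
Proof.
  intros Ht. pose proof (exp_pos (t ^ 2 / 2)).
  assert (HE : exp (t * (t * 1) * / 2) = exp (t ^ 2 / 2)) by (f_equal; simpl; field).
  unfold ell_sq, ell_sq_deriv. auto_derive; rewrite HE.
  - apply Rmult_integral_contrapositive. simpl. split; [nra | lra].
  - field. lra.
Qed.

Lemma is_derive_ell (t : R) : t <> 0 ->
  is_derive ell t (ell_sq_deriv t / (2 * ell t)).
Proof. intros Ht. apply is_derive_sqrt; [apply is_derive_ell_sq | apply ell_sq_pos]; exact Ht. Qed.

Lemma ell_sq_deriv_le (t g : R) : 0 < t -> 0 <= g ->
  exp (t ^ 2 / 2) * (exp (t ^ 2 / 2) - 1) <= g ^ 2 -> ell_sq_deriv t <= 2 * ell t * g.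
Proof.
  intros Ht Hg Hg2.
  assert (Hell : ell t ^ 2 = ell_sq t) by (apply pow2_sqrt; left; apply ell_sq_pos; lra).
  assert (Hell0 : 0 <= ell t) by apply sqrt_pos.
  unfold ell_sq_deriv; unfold ell_sq in Hell.
  pose proof (exp_ineq1_le (t ^ 2 / 2)) as HE. pose proof (exp_pos (t ^ 2 / 2)) as HE0.
  set (E := exp (t ^ 2 / 2)) in *.
  assert (Hderiv : 3 * (E - 1) ^ 2 / t - (E - 1) ^ 3 * (t ^ 2 + 2) / (t ^ 3 * E)
                   <= 2 * ((E - 1) ^ 2 / t)).
  { assert (0 <= 2 * (E - 1) ^ 2 * (E - 1 - t ^ 2 / 2) / (t ^ 3 * E)).
    { apply Rdiv_le_0_compat; [apply Rmult_le_pos; nra|].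
      apply Rmult_lt_0_compat; [apply pow_lt|]; lra. }
    replace (3 * (E - 1) ^ 2 / t - (E - 1) ^ 3 * (t ^ 2 + 2) / (t ^ 3 * E))
      with (2 * ((E - 1) ^ 2 / t) - 2 * (E - 1) ^ 2 * (E - 1 - t ^ 2 / 2) / (t ^ 3 * E))
      by (field; split; lra).
    lra. }
  assert (Hroot : (E - 1) ^ 2 / t <= ell t * g).
  { apply Rsqr_incr_0_var; [|apply Rmult_le_pos; assumption].
    rewrite !Rsqr_pow2, Rpow_mult_distr, Hell.
    replace (((E - 1) ^ 2 / t) ^ 2) with ((E - 1) ^ 3 / (t ^ 2 * E) * (E * (E - 1)))
      by (field; split; lra).
    apply Rmult_le_compat_l; [|exact Hg2].
    apply Rdiv_le_0_compat; [apply pow_le | apply Rmult_lt_0_compat]; nra. }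
  lra.
Qed.

Lemma derive_ell_le_I_integrand (t : R) : 0 < t -> ell_sq_deriv t / (2 * ell t) <= I_integrand t.
Proof.
  intros Ht. assert (0 < ell t) by (apply sqrt_lt_R0, ell_sq_pos; lra).
  apply Rmult_le_reg_l with (2 * ell t); [lra|].
  replace (2 * ell t * (ell_sq_deriv t / (2 * ell t))) with (ell_sq_deriv t) by (field; lra).
  apply ell_sq_deriv_le; [exact Ht | apply I_integrand_nonneg; lra | apply I_integrand_sq_ge].
Qed.

Lemma ell_le_sq (e : R) : 0 < e <= 1 -> ell e <= 2 * e ^ 2.
Proof.
  intros He. pose proof (exp_half_sq_gt_1 e ltac:(lra)) as HE1.
  pose proof (exp_sub_1_le_mul (e ^ 2 / 2)) as HEe.
  assert (HE3 : exp (e ^ 2 / 2) <= 3).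
  { apply Rle_trans with (exp 1); [apply exp_le_compat; nra | apply exp_le_3]. }
  unfold ell, ell_sq. set (E := exp (e ^ 2 / 2)) in *.
  rewrite <- (sqrt_pow2 (2 * e ^ 2)) by nra.
  apply sqrt_le_1_alt, Rle_trans with ((E - 1) ^ 2).
  - apply Rmult_le_reg_r with (e ^ 2 * E); [nra|].
    replace ((E - 1) ^ 3 / (e ^ 2 * E) * (e ^ 2 * E)) with ((E - 1) ^ 2 * (E - 1))
      by (field; split; nra).
    apply Rmult_le_compat_l; nra.
  - apply pow_incr. nra.
Qed.

Lemma ell_opp (x : R) : ell (- x) = ell x.
Proof. unfold ell. now replace ((- x) ^ 2) with (x ^ 2) by ring. Qed.

Lemma I_int_sub_ell_le (e x : R) : 0 < e <= x -> I_int e - ell e <= I_int x - ell x.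
Proof.
  intros He.
  apply (le_of_is_derive_nonneg (fun t => I_int t - ell t)
           (fun t => I_integrand t - ell_sq_deriv t / (2 * ell t))); [lra | |].
  - intros t Ht. apply (is_derive_minus I_int ell).
    + apply is_derive_I_int.
    + apply is_derive_ell. lra.
  - intros t Ht. pose proof (derive_ell_le_I_integrand t ltac:(lra)). lra.
Qed.

Lemma Rle_0_of_forall_ge_opp (a c : R) : 0 < c -> (forall e, 0 < e <= c -> - e <= a) -> 0 <= a.
Proof.
  intros Hc Ha. destruct (Rle_or_lt 0 a) as [|Hneg]; [assumption|].
  set (e := Rmin c (- a / 2)).
  assert (He : 0 < e <= c) by (split; [apply Rmin_pos | apply Rmin_l]; lra).
  assert (e <= - a / 2) by apply Rmin_r.
  pose proof (Ha e He). lra.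
Qed.

Lemma ell_le_I_int_pos (x : R) : 0 < x -> ell x <= I_int x.
Proof.
  intros Hx. enough (0 <= I_int x - ell x) by lra.
  apply (Rle_0_of_forall_ge_opp _ (Rmin x (1 / 2))); [apply Rmin_pos; lra|].
  intros e [He0 He]. pose proof (Rmin_l x (1 / 2)). pose proof (Rmin_r x (1 / 2)).
  pose proof (I_int_sub_ell_le e x ltac:(lra)).
  pose proof (ell_le_sq e ltac:(lra)). pose proof (I_int_nonneg e ltac:(lra)).
  nra.
Qed.

Theorem lemma8 (x : R) (hx : x <> 0) : ell x <= I_int x.
Proof.
  destruct (Rlt_or_le 0 x) as [Hpos | Hneg].
  - now apply ell_le_I_int_pos.
  - rewrite <- ell_opp, <- I_int_opp. apply ell_le_I_int_pos. lra.
Qed.
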